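(* If $C_1,C_2\subseteq\mathbb{F}_2^n$ are binary linear constant weight codes of the same dimension and the same weight, then they are permutation equivalent, i.e. there is $\sigma\in S_n$ with $\sigma(C_1)=C_2$.
   Context: A binary linear code of length $n$ is an $\mathbb{F}_2$-subspace of $\mathbb{F}_2^n$; it is a constant weight code of weight $w$ if every non-zero codeword has Hamming weight $w$. The symmetric group $S_n$ acts on $\mathbb{F}_2^n$ by $\sigma(v_1,\dots,v_n)=(v_{\sigma^{-1}(1)},\dots,v_{\sigma^{-1}(n)})$. *)

From mathcomp Require Import all_boot all_order all_algebra all_fingroup.
Set Implicit Arguments. Unset Strict Implicit. Unset Printing Implicit Defensive.
Import GRing.Theory.
Local Open Scope ring_scope.

Definition hweight (n : nat) (v : 'rV['F_2]_n) : nat := #|[set i | v 0 i != 0]|.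

Definition constant_weight (n : nat) (C : {vspace 'rV['F_2]_n}) (w : nat) : Prop :=
  forall v, v \in C -> v != 0 -> hweight v = w.

Definition perm_act (n : nat) (s : 'S_n) (v : 'rV['F_2]_n) : 'rV['F_2]_n :=
  \row_i v 0 ((s^-1)%g i).

From mathcomp Require Import all_boot all_order all_algebra all_fingroup ring.
Set Implicit Arguments. Unset Strict Implicit. Unset Printing Implicit Defensive.
Import GRing.Theory Num.Theory.
Local Open Scope ring_scope.

(* Write both codes as images m |-> m G of injective generator matrices of the
   same shape k x n.  The characters chi (m . x) of F_2^k, x in F_2^k, are
   orthogonal, and for m <> 0 the sum over the columns G_j of chi (m . G_j) is
   n - 2w.  Fourier inversion then gives
     2^k #{j | G_j = x} = (n - 2w) 2^k [x = 0] + 2w,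
   so the columns of the two generator matrices form the same multiset, and a
   permutation matching the columns maps one code onto the other. *)

Definition chi (a : 'F_2) : int := 1 - 2 * (a != 0)%:R.

Lemma chi0 : chi 0 = 1. Proof. by []. Qed.

Lemma chiD (a b : 'F_2) : chi (a + b) = chi a * chi b.
Proof. by move: a b; do 2!case=> [[|[|//]]] ?. Qed.

Lemma chi_eq_N1 (a : 'F_2) : a != 0 -> chi a = -1.
Proof. by move: a; case=> [[|[|//]]] ?. Qed.

Lemma oppmx_F2 m l (A : 'M['F_2]_(m, l)) : - A = A.
Proof. by apply/matrixP => i j; rewrite mxE (oppr_pchar2 (pchar_Fp _)). Qed.

Lemma sumr_pred_card (I : finType) (P : pred I) :
  \sum_(j : I) ((P j)%:R : int) = #|P|%:R.
Proof.
rewrite -sum1_card natr_sum [in RHS]big_mkcond; apply: eq_bigr => j _.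
by rewrite -topredE /=; case: (P j).
Qed.

Lemma hweight0 n : hweight (0 : 'rV['F_2]_n) = 0%N.
Proof. by apply: eq_card0 => j; rewrite inE mxE eqxx. Qed.

Lemma sum_chi_row n (v : 'rV['F_2]_n) :
  \sum_j chi (v 0 j) = n%:R - 2 * (hweight v)%:R.
Proof.
rewrite /chi sumrB sumr_const card_ord -mulr_sumr /hweight cardsE.
by rewrite (sumr_pred_card [pred j | v 0 j != 0]).
Qed.

Lemma mulmx_col_entry (R : pzSemiRingType) k n (m : 'rV[R]_k) (G : 'M[R]_(k, n))
    j :
  (m *m col j G) 0 0 = (m *m G) 0 j.
Proof. by rewrite colE mulmxA -colE mxE. Qed.

Lemma sum_chi_mulmx k (x : 'cV['F_2]_k) :
  \sum_(m : 'rV_k) chi ((m *m x) 0 0)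
    = if x == 0 then #|{: 'rV['F_2]_k}|%:R else 0.
Proof.
have [->|xn0] := eqVneq x 0.
  by rewrite (eq_bigr (fun _ => 1)) ?sumr_const // => m _; rewrite mulmx0 mxE.
have [i xi] : exists i, x i 0 != 0.
  apply/existsP; apply: contraNT xn0; rewrite negb_exists => /forallP x0.
  by apply/eqP/colP => i; rewrite mxE; apply/eqP; move: (x0 i); rewrite negbK.
set S := \sum_m _.
(* Translating m by the i-th unit vector flips the sign of every term. *)
have SN : S = - S.
  rewrite {1}/S (reindex_inj (addrI (delta_mx 0 i))) /= -sumrN.
  apply: eq_bigr => m _.
  by rewrite mulmxDl mxE chiD -rowE mxE [chi (x i 0)]chi_eq_N1 // mulN1r.
by move/eqP: SN; rewrite -subr_eq0 opprK -mulr2n mulrn_eq0 /= => /eqP.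
Qed.

Section ColumnCount.

Variables (k n w : nat) (G : 'M['F_2]_(k, n)).
Hypothesis weightG : forall m : 'rV_k, m != 0 -> hweight (m *m G) = w.

Lemma col_count_weight (x : 'cV_k) :
  #|{: 'rV['F_2]_k}|%:R * (#|[pred j | col j G == x]|%:R : int)
    = (n%:R - 2 * w%:R) * (if x == 0 then #|{: 'rV['F_2]_k}|%:R else 0)
      + 2 * w%:R.
Proof.
have inversion : \sum_(m : 'rV_k) chi ((m *m x) 0 0) * \sum_j chi ((m *m G) 0 j)
    = #|{: 'rV['F_2]_k}|%:R * (#|[pred j | col j G == x]|%:R : int).
  under eq_bigr => m _ do rewrite mulr_sumr.
  rewrite exchange_big /= -(sumr_pred_card [pred j | col j G == x]) mulr_sumr.
  apply: eq_bigr => j _ /=.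
  rewrite (eq_bigr (fun m => chi ((m *m (x + col j G)) 0 0))) => [|m _]; last first.
    by rewrite mulmxDr [in RHS]mxE chiD mulmx_col_entry.
  rewrite sum_chi_mulmx addr_eq0 oppmx_F2 eq_sym.
  by case: (col j G == x); rewrite ?mulr1 ?mulr0.
rewrite -inversion (bigD1 0) //= !mul0mx sum_chi_row hweight0 [(0 : 'M_1) 0 0]mxE.
rewrite (eq_bigr (fun m => chi ((m *m x) 0 0) * (n%:R - 2 * w%:R))); last first.
  by move=> m m0; rewrite sum_chi_row weightG.
rewrite -mulr_suml -sum_chi_mulmx [in RHS](bigD1 0) //= mul0mx.
rewrite [(0 : 'M_1) 0 0]mxE chi0.
ring.
Qed.

End ColumnCount.

Lemma col_count_eq k n w (G1 G2 : 'M['F_2]_(k, n)) :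
  (forall m, m != 0 -> hweight (m *m G1) = w) ->
  (forall m, m != 0 -> hweight (m *m G2) = w) ->
  forall x, #|[pred j | col j G1 == x]| = #|[pred j | col j G2 == x]|.
Proof.
move=> w1 w2 x; have := col_count_weight w1 x; rewrite -(col_count_weight w2 x).
have card_neq0 : (#|{: 'rV['F_2]_k}|%:R : int) != 0.
  by rewrite pnatr_eq0 -lt0n; apply/card_gt0P; exists 0.
by move/(mulfI card_neq0)/eqP; rewrite eqr_nat => /eqP.
Qed.

Lemma perm_of_eq_count (T : eqType) n (f g : 'I_n -> T) :
  (forall x, #|[pred j | f j == x]| = #|[pred j | g j == x]|) ->
  exists s : 'S_n, forall j, f j = g (s j).
Proof.
move=> count_fg.
have count_map (h : 'I_n -> T) x :
    count_mem x (map h (enum 'I_n)) = #|[pred j | h j == x]|.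
  rewrite count_map cardE /enum_mem size_filter count_filter.
  by apply: eq_count => j; rewrite /= !inE andbT.
have /tuple_permP[s fg] : perm_eq [tuple f j | j < n] [tuple g j | j < n].
  by apply/allP => x _ /=; rewrite !count_map count_fg.
exists s => j; have := congr1 (fun t : n.-tuple T => tnth t j) (val_inj fg).
by rewrite /= !tnth_mktuple.
Qed.

Lemma generator_matrix (F : fieldType) n (C : {vspace 'rV[F]_n}) (k : nat) :
  \dim C = k ->
  exists2 G : 'M[F]_(k, n),
    (forall v, v \in C <-> exists m : 'rV_k, v = m *m G)
  & (forall m : 'rV_k, m *m G = 0 -> m = 0).
Proof.
move=> <-; pose b := vbasis C.
exists (\matrix_i b`_i) => [v|m].
- split=> [vC|[m ->]].
    exists (\row_i coord b i v); rewrite mulmx_sum_row {1}(coord_vbasis vC).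
    by apply: eq_bigr => i _; rewrite rowK mxE.
  rewrite mulmx_sum_row; apply: memv_suml => i _; rewrite rowK; apply: memvZ.
  by apply/vbasis_mem/mem_nth; rewrite size_tuple.
- rewrite mulmx_sum_row => comb0; apply/rowP => i; rewrite mxE.
  have /freeP := basis_free (vbasisP C); apply.
  by rewrite -[RHS]comb0; apply: eq_bigr => j _; rewrite rowK.
Qed.

Lemma generator_weight n (C : {vspace 'rV['F_2]_n}) w k (G : 'M_(k, n)) :
  constant_weight C w ->
  (forall v, v \in C <-> exists m : 'rV_k, v = m *m G) ->
  (forall m : 'rV_k, m *m G = 0 -> m = 0) ->
  forall m : 'rV_k, m != 0 -> hweight (m *m G) = w.
Proof.
move=> cwC genC injG m m0; apply: cwC; first by apply/genC; exists m.
exact: contra_neq (@injG m) m0.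
Qed.

Lemma perm_act_mulmx n k (s : 'S_n) (G1 G2 : 'M['F_2]_(k, n)) (m : 'rV_k) :
  (forall j, col j G1 = col (s j) G2) -> perm_act s (m *m G1) = m *m G2.
Proof.
move=> colG; apply/rowP => i.
by rewrite [LHS]mxE -mulmx_col_entry colG mulmx_col_entry permKV.
Qed.

Theorem theorem4p3 (n : nat) (C1 C2 : {vspace 'rV['F_2]_n}) (w : nat) :
  \dim C1 = \dim C2 ->
  constant_weight C1 w -> constant_weight C2 w ->
  exists s : 'S_n, forall v : 'rV['F_2]_n,
    (v \in C2) <-> (exists2 u, u \in C1 & v = perm_act s u).
Proof.
move=> dimE cw1 cw2.
have [G1 gen1 inj1] := generator_matrix (erefl (\dim C1)).
have [G2 gen2 inj2] := generator_matrix (esym dimE).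
have [s colG] := perm_of_eq_count
  (col_count_eq (generator_weight cw1 gen1 inj1) (generator_weight cw2 gen2 inj2)).
exists s => v; split.
- move/gen2 => [m ->]; exists (m *m G1); first by apply/gen1; exists m.
  by rewrite (perm_act_mulmx _ colG).
- by move=> [u /gen1 [m ->] ->]; apply/gen2; exists m; rewrite (perm_act_mulmx _ colG).
Qed.
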